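(* Let $G$ be a nilpotent group of class $5$. Then for all $g,h\in G$ and all $n\in\mathbb{N}$, $$g^n\wedge h = ([g,h]\wedge [g,g,g,h])^{\binom{n}{4}} ([g,h]\wedge [g,g,h])^{\binom{n}{3}} (g\wedge [g,g,g,g,h])^{\binom{n}{5}} (g\wedge [g,g,g,h])^{\binom{n}{4}} (g\wedge [g,g,h])^{\binom{n}{3}} (g\wedge [g,h])^{\binom{n}{2}} (g\wedge h)^n$$ in the exterior square $G\wedge G$.
   Context: Conventions: ${}^g h = ghg^{-1}$, $[g,h]=ghg^{-1}h^{-1}$, and commutators are right normed: $[a,b,c]=[a,[b,c]]$, $[a,b,c,d]=[a,[b,[c,d]]]$, etc. $\binom{n}{r}=0$ if $r>n$. The nonabelian tensor square $G\otimes G$ is generated by symbols $g\otimes h$ subject to $gg'\otimes h=({}^g g'\otimes {}^g h)(g\otimes h)$ and $g\otimes hh'=(g\otimes h)({}^h g\otimes {}^h h')$; the exterior square $G\wedge G$ is its quotient by the subgroup generated by all $x\otimes x$, and $g\wedge h$ denotes the image of $g\otimes h$. *)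

From mathcomp Require Import all_boot.
Set Implicit Arguments. Unset Strict Implicit. Unset Printing Implicit Defensive.

Record AbsGroup := {
  carrier :> Type;
  gmul : carrier -> carrier -> carrier;
  gone : carrier;
  ginv : carrier -> carrier;
  gmulA : forall x y z, gmul x (gmul y z) = gmul (gmul x y) z;
  gmul1 : forall x, gmul gone x = x;
  gmulV : forall x, gmul (ginv x) x = gone
}.

Arguments gmul {a}. Arguments gone {a}. Arguments ginv {a}.

Section Ops.
Variable G : AbsGroup.

Definition conj (g h : G) : G := gmul (gmul g h) (ginv g).
Definition comm (g h : G) : G := gmul (gmul (gmul g h) (ginv g)) (ginv h).

Fixpoint gpow (g : G) (n : nat) : G :=
  match n with 0 => gone | S m => gmul (gpow g m) g end.

Inductive gen (S : G -> Prop) : G -> Prop :=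
| gen_base x : S x -> gen S x
| gen_one : gen S gone
| gen_mul x y : gen S x -> gen S y -> gen S (gmul x y)
| gen_inv x : gen S x -> gen S (ginv x).

(* lower central series: lcs 1 = G (also lcs 0 = G), lcs (i+1) = [lcs i, G] *)
Fixpoint lcs (i : nat) : G -> Prop :=
  match i with
  | 0 => fun _ => True
  | 1 => fun _ => True
  | S j => gen (fun z => exists x y, lcs j x /\ z = comm x y)
  end.

Definition nilpotent_of_class (c : nat) : Prop :=
  (forall x, lcs c.+1 x -> x = gone) /\ (exists x, lcs c x /\ x <> gone).
End Ops.

(* An exterior pairing G x G -> L: a map satisfying the defining relations of the
   nonabelian exterior square. G /\ G is the universal such pairing, so an identity
   among the generators g /\ h holds in G /\ G iff it holds for every exterior pairing. *)
Definition exterior_pairing (G L : AbsGroup) (phi : G -> G -> L) : Prop :=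
  (forall g g' h : G,
      phi (gmul g g') h = gmul (phi (conj g g') (conj g h)) (phi g h)) /\
  (forall g h h' : G,
      phi g (gmul h h') = gmul (phi g h) (phi (conj h g) (conj h h'))) /\
  (forall x : G, phi x x = gone).

From Pilot Require Import Defs.
From mathcomp Require Import all_boot zify.
From Stdlib Require List.
Set Implicit Arguments. Unset Strict Implicit. Unset Printing Implicit Defensive.

(* Write h_k = [g, ..., g, h] with k copies of g, u_k = g /\ h_k and F(n, k) = g^n /\ h_k.
   The defining relations give (x g) /\ y = (x /\ [g, y]) (g /\ y) (x /\ y), hence
   F(n+1, k) = F(n, k+1) u_k F(n, k), and F(n, 5) = 1 since h_5 lies in gamma_6 = 1.
   The commutator of a /\ b and d /\ e is [a, b] /\ [d, e], and in class c the pairing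
   kills gamma_p /\ gamma_q as soon as p + q >= c + 2 (downward induction on max(p, q)).
   So u_1, ..., u_4, h_1 /\ h_2 and h_1 /\ h_3 commute pairwise, u_0 commutes with u_3
   and u_4, and u_0 passes u_1 and u_2 at the cost of the factors h_1 /\ h_2 and h_1 /\ h_3.
   Solving the recurrence from k = 4 down to k = 0 in these commuting elements yields the
   binomial exponents by Pascal's rule. *)

Section GroupLaws.
Variable G : AbsGroup.
Implicit Types x y z : G.

Lemma gmulrV x : gmul x (ginv x) = gone.
Proof.
rewrite -[gmul x (ginv x)]gmul1 -(gmulV (ginv x)) -gmulA.
by rewrite (gmulA (ginv x) x) gmulV gmul1 gmulV.
Qed.

Lemma gmulr1 x : gmul x gone = x.
Proof. by rewrite -(gmulV x) gmulA gmulrV gmul1. Qed.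

Lemma ginv_unique x y : gmul x y = gone -> ginv x = y.
Proof. by move=> xy1; rewrite -[ginv x]gmulr1 -xy1 gmulA gmulV gmul1. Qed.

Lemma ginvM x y : ginv (gmul x y) = gmul (ginv y) (ginv x).
Proof. by apply: ginv_unique; rewrite -gmulA (gmulA y) gmulrV gmul1 gmulrV. Qed.

Lemma ginvK x : ginv (ginv x) = x.
Proof. by apply: ginv_unique; rewrite gmulV. Qed.

Lemma ginv1 : ginv (@gone G) = gone.
Proof. by apply: ginv_unique; rewrite gmul1. Qed.

Lemma gmulKr x y : gmul (ginv x) (gmul x y) = y.
Proof. by rewrite gmulA gmulV gmul1. Qed.

Lemma gmulVKr x y : gmul x (gmul (ginv x) y) = y.
Proof. by rewrite gmulA gmulrV gmul1. Qed.

Lemma gmulrI x y z : gmul x y = gmul x z -> y = z.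
Proof. by move=> xy_xz; rewrite -(gmulKr x y) xy_xz gmulKr. Qed.

Lemma gmulIr x y z : gmul y x = gmul z x -> y = z.
Proof.
move=> yx_zx.
by rewrite -(gmulr1 y) -(gmulrV x) gmulA yx_zx -gmulA gmulrV gmulr1.
Qed.

End GroupLaws.

Ltac group_norm :=
  unfold Pilot.Defs.conj, Pilot.Defs.comm;
  repeat progress rewrite ?ginvM ?ginvK ?ginv1 -?gmulA ?gmul1 ?gmulr1 ?gmulV
    ?gmulrV ?gmulKr ?gmulVKr.

Lemma conjE (G : AbsGroup) (x y : G) : conj x y = gmul (comm x y) y.
Proof. by group_norm. Qed.

Lemma conjM (G : AbsGroup) (w x y : G) : conj w (gmul x y) = gmul (conj w x) (conj w y).
Proof. by group_norm. Qed.

Section Commuting.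
Variable L : AbsGroup.
Implicit Types x y z : L.

Definition gcommute x y := gmul x y = gmul y x.

Lemma gcommute_sym x y : gcommute x y -> gcommute y x.
Proof. by []. Qed.

Lemma gcommuteM x y z : gcommute x y -> gcommute x z -> gcommute x (gmul y z).
Proof. by rewrite /gcommute => xy xz; rewrite gmulA xy -gmulA xz gmulA. Qed.

Lemma gcommuteX x y n : gcommute x y -> gcommute x (gpow y n).
Proof.
move=> xy; elim: n => [|n IH]; last exact: gcommuteM.
by rewrite /gcommute gmul1 gmulr1.
Qed.

Lemma gpowD x m n : gpow x (m + n) = gmul (gpow x m) (gpow x n).
Proof.
elim: n => [|n IH]; first by rewrite addn0 gmulr1.
by rewrite addnS /= IH -gmulA.
Qed.

Lemma gpowSl x n : gmul x (gpow x n) = gpow x n.+1.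
Proof. exact: gcommuteX. Qed.

Lemma gpow_twist x y z m : gmul x y = gmul (gmul z y) x -> gcommute z y ->
  gmul x (gpow y m) = gmul (gmul (gpow z m) (gpow y m)) x.
Proof.
move=> xy zy; elim: m => [|m IH] /=; first by rewrite !gmul1 gmulr1.
have zym : gcommute z (gpow y m) by exact: gcommuteX.
rewrite gmulA IH -!gmulA xy -!gmulA; congr gmul.
by rewrite !gmulA zym.
Qed.

Fixpoint monomial (xs : seq L) (es : seq nat) : L :=
  match xs, es with
  | x :: xs', e :: es' => gmul (gpow x e) (monomial xs' es')
  | _, _ => gone
  end.

Definition addv (es fs : seq nat) : seq nat := [seq p.1 + p.2 | p <- zip es fs].

Lemma gcommute_monomial x xs es :
  List.Forall (gcommute x) xs -> gcommute x (monomial xs es).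
Proof.
move=> hx; elim: hx es => [|y ys xy _ IH] [|e es] /=;
  try by rewrite /gcommute gmul1 gmulr1.
by apply: gcommuteM; [exact: gcommuteX | exact: IH].
Qed.

Lemma monomialD xs es fs : List.ForallOrdPairs gcommute xs -> size es = size fs ->
  gmul (monomial xs es) (monomial xs fs) = monomial xs (addv es fs).
Proof.
move=> hxs; elim: hxs es fs => [|x ys hx _ IH] [|e es] [|f fs] //=; try by rewrite gmul1.
move=> [sz]; rewrite gpowD -!gmulA -IH //; congr gmul; rewrite !gmulA; congr gmul.
apply/gcommute_sym/gcommute_monomial; apply: (List.Forall_impl (P := gcommute x)) hx.
by move=> y xy; apply/gcommute_sym/gcommuteX.
Qed.

End Commuting.

Section LowerCentralSeries.
Variable G : AbsGroup.
Implicit Types a b w x y : G.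

Lemma lcs1 k : lcs k (@gone G).
Proof. by case: k => [|[|k]] //; exact: gen_one. Qed.

Lemma lcsM k x y : lcs k x -> lcs k y -> lcs k (gmul x y).
Proof. by case: k => [|[|k]] //; exact: gen_mul. Qed.

Lemma lcsV k x : lcs k x -> lcs k (ginv x).
Proof. by case: k => [|[|k]] //; exact: gen_inv. Qed.

Lemma lcsJ k w x : lcs k x -> lcs k (conj w x).
Proof.
elim: k w x => [|[|k] IH] w x //= hx.
elim: hx => {x} [_ [a [b [ha ->]]] | | x y _ hx _ hy | x _ hx].
- apply: gen_base; exists (conj w a), (conj w b); split; first exact: IH.
  by group_norm.
- have -> : conj w (@gone G) = gone by group_norm.
  exact: gen_one.
- have -> : conj w (gmul x y) = gmul (conj w x) (conj w y) by group_norm.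
  exact: gen_mul.
- have -> : conj w (ginv x) = ginv (conj w x) by group_norm.
  exact: gen_inv.
Qed.

Lemma lcsR1 k x y : lcs k x -> lcs k.+1 (comm x y).
Proof. by case: k => [|k] // hx; apply: gen_base; exists x, y. Qed.

Lemma lcsR i j x y : lcs i x -> lcs j y -> lcs (i + j) (comm x y).
Proof.
elim: j i x y => [|[|j] IH] i x y hx hy.
- have -> : comm x y = gmul x (conj y (ginv x)) by group_norm.
  by rewrite addn0; apply: lcsM => //; apply/lcsJ/lcsV.
- by rewrite addn1; apply: lcsR1.
- elim: hy => {y} [_ [a [b [ha ->]]] | | y z _ hy _ hz | y _ hy].
  + set x' := conj (ginv b) x.
    have -> : comm x (comm a b) =
              gmul (comm (ginv (comm x' b)) (conj x' a)) (comm (comm x' a) (conj a b)).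
      by rewrite /x'; group_norm.
    apply: lcsM.
    * rewrite -addSnnS; apply: IH; last exact: lcsJ.
      exact/lcsV/lcsR1/lcsJ.
    * by rewrite addnS; apply/lcsR1/IH => //; apply: lcsJ.
  + have -> : comm x (@gone G) = gone by group_norm.
    exact: lcs1.
  + have -> : comm x (gmul y z) = gmul (comm x y) (conj y (comm x z)) by group_norm.
    by apply: lcsM => //; apply: lcsJ.
  + have -> : comm x (ginv y) = conj (ginv y) (ginv (comm x y)) by group_norm.
    exact/lcsJ/lcsV.
Qed.

Lemma lcsS k x : lcs k.+1 x -> lcs k x.
Proof.
case: k => [|k] // hx; elim: hx => {x} [_ [a [b [ha ->]]] | | x y _ hx _ hy | x _ hx].
- by rewrite -[k.+1]addn0; apply: lcsR.
- exact: lcs1.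
- exact: lcsM.
- exact: lcsV.
Qed.

Lemma lcs_le m k x : m <= k -> lcs k x -> lcs m x.
Proof.
move=> /subnK <-; elim: (k - m) x => [|d IH] x; first by rewrite add0n.
by rewrite addSn => /lcsS; apply: IH.
Qed.

Lemma lcs_iter_comm (g h : G) k : lcs k.+1 (iter k (comm g) h).
Proof. by elim: k => [|k IH] //; rewrite -add1n; apply: lcsR. Qed.

End LowerCentralSeries.

Section ExteriorPairing.
Variables (G L : AbsGroup) (phi : G -> G -> L).
Hypothesis hphi : exterior_pairing phi.
Implicit Types a b d e w x y z : G.

Lemma wedge_mull x y z : phi (gmul x y) z = gmul (phi (conj x y) (conj x z)) (phi x z).
Proof. by case: hphi. Qed.

Lemma wedge_mulr x y z : phi x (gmul y z) = gmul (phi x y) (phi (conj y x) (conj y z)).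
Proof. by case: hphi => _ []. Qed.

Lemma wedgexx x : phi x x = gone.
Proof. by case: hphi => _ []. Qed.

Lemma wedge1l z : phi gone z = gone.
Proof.
have := wedge_mull gone gone z.
have -> : conj (@gone G) gone = gone by group_norm.
have -> : conj (@gone G) z = z by group_norm.
by rewrite gmul1 -{1}[phi gone z]gmul1 => /gmulIr <-.
Qed.

Lemma wedge1r z : phi z gone = gone.
Proof.
have := wedge_mulr z gone gone.
have -> : conj (@gone G) gone = gone by group_norm.
have -> : conj (@gone G) z = z by group_norm.
by rewrite gmul1 -{1}[phi z gone]gmulr1 => /gmulrI <-.
Qed.

Lemma wedgeC a b : phi b a = ginv (phi a b).
Proof.
apply/esym/ginv_unique; have := wedgexx (gmul a b).
rewrite {2}[gmul a b](_ : _ = gmul b (conj (ginv b) a)); last by group_norm.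
rewrite wedge_mulr.
have -> : conj b (gmul a b) = gmul b a by group_norm.
have -> : conj b (conj (ginv b) a) = a by group_norm.
by rewrite (wedge_mull a b b) (wedge_mull b a a) !wedgexx !gmul1.
Qed.

Lemma wedge_conj_comm a b x y :
  gmul (phi (conj (comm a b) x) (conj (comm a b) y)) (phi a b) =
  gmul (phi a b) (phi x y).
Proof.
set x0 := conj (ginv (gmul b a)) x; set y0 := conj (ginv (gmul b a)) y.
have left_first : phi (gmul a x0) (gmul b y0) =
  gmul (gmul (gmul (phi (conj a x0) (conj a b))
    (phi (conj (conj a b) (conj a x0)) (conj (conj a b) (conj a y0))))
    (phi a b)) (phi (conj b a) (conj b y0)).
  by rewrite wedge_mull conjM wedge_mulr (wedge_mulr a b) -!gmulA.
have right_first : phi (gmul a x0) (gmul b y0) =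
  gmul (gmul (gmul (phi (conj a x0) (conj a b)) (phi a b))
    (phi (conj (conj b a) (conj b x0)) (conj (conj b a) (conj b y0))))
    (phi (conj b a) (conj b y0)).
  by rewrite wedge_mulr wedge_mull conjM wedge_mull -!gmulA.
move: right_first; rewrite left_first => /gmulIr; rewrite -!gmulA => /gmulrI.
have -> : conj (conj a b) (conj a x0) = conj (comm a b) x by rewrite /x0; group_norm.
have -> : conj (conj a b) (conj a y0) = conj (comm a b) y by rewrite /y0; group_norm.
have -> : conj (conj b a) (conj b x0) = x by rewrite /x0; group_norm.
by have -> : conj (conj b a) (conj b y0) = y by rewrite /y0; group_norm.
Qed.

Lemma wedge_commr x a b :
  phi x (comm a b) = gmul (phi (conj x a) (conj x b)) (ginv (phi a b)).
Proof.
have wedge_conj : phi x (conj a b) =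
    gmul (gmul (phi (conj x a) (conj x b)) (phi x b)) (ginv (phi a b)).
  have := wedge_mull a (conj (ginv a) x) b.
  rewrite (_ : gmul a (conj (ginv a) x) = gmul x a); last by group_norm.
  rewrite (_ : conj a (conj (ginv a) x) = x); last by group_norm.
  by rewrite wedge_mull => ->; group_norm.
have wedge_act : phi (conj (comm a b) x) (conj (comm a b) b) =
    gmul (gmul (phi a b) (phi x b)) (ginv (phi a b)).
  by rewrite -wedge_conj_comm; group_norm.
have := wedge_mulr x (comm a b) b.
rewrite (_ : gmul (comm a b) b = conj a b); last by group_norm.
rewrite wedge_conj wedge_act => expand.
apply: (@gmulIr _ (gmul (gmul (phi a b) (phi x b)) (ginv (phi a b)))).
by rewrite -expand; group_norm.
Qed.

Lemma wedge_commutator a b d e :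
  gmul (phi a b) (phi d e) =
  gmul (gmul (phi (comm a b) (comm d e)) (phi d e)) (phi a b).
Proof. by rewrite -wedge_conj_comm wedge_commr; group_norm. Qed.

Lemma wedge_mull_comm x y z :
  phi (gmul x y) z = gmul (gmul (phi x (comm y z)) (phi y z)) (phi x z).
Proof. by rewrite wedge_mull wedge_commr; group_norm. Qed.

Lemma wedge_gen_eq1 (X S : G -> Prop) :
  (forall w x, X x -> X (conj w x)) -> (forall w s, S s -> S (conj w s)) ->
  (forall x s, X x -> S s -> phi x s = gone) ->
  forall x y, X x -> gen S y -> phi x y = gone.
Proof.
move=> XJ SJ XS x y hx hy.
suff wedge_conj : forall w x, X x -> phi x (conj w y) = gone.
  by have := wedge_conj gone x hx; rewrite (_ : conj gone y = y) //; group_norm.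
elim: hy {x hx} => {y} [s hs | | y z _ IHy _ IHz | y _ IHy] w x hx.
- exact/XS/SJ.
- by rewrite (_ : conj w gone = gone) ?wedge1r //; group_norm.
- rewrite conjM wedge_mulr IHy // gmul1.
  rewrite (_ : conj (conj w y) (conj w z) = conj (gmul (conj w y) w) z); last by group_norm.
  exact/IHz/XJ.
- have := wedge_mulr x (ginv (conj w y)) (conj w y).
  rewrite gmulV wedge1r (_ : conj _ (conj w y) = conj w y); last by group_norm.
  rewrite IHy ?gmulr1; last exact: XJ.
  by rewrite (_ : conj w (ginv y) = ginv (conj w y)) //; group_norm.
Qed.

Section Nilpotent.
Variable c : nat.
Hypothesis nilG : forall x : G, lcs c.+1 x -> x = gone.

Lemma lcs_trivial k x : c < k -> lcs k x -> x = gone.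
Proof. by move=> lt_ck /(lcs_le lt_ck); apply: nilG. Qed.

Lemma wedge_mulr_lcs r t s a z b : lcs r a -> c < r + t ->
  (forall s z, t <= s -> lcs s z -> phi a z = gone) ->
  t <= s -> lcs s z -> phi a (gmul z b) = phi a b.
Proof.
move=> ha lt_c_rt a_z le_ts hz.
have [n lt_c_sn] : exists n, c < s + n by exists c.+1; lia.
elim: n s z b le_ts hz lt_c_sn => [|n IH] s z b le_ts hz lt_c_sn.
  by rewrite (lcs_trivial _ hz) ?gmul1 // -(addn0 s).
rewrite wedge_mulr (a_z s) // gmul1 conjE (lcs_trivial _ (lcsR hz ha)) ?gmul1; last by lia.
rewrite conjE (IH s.+1) //; first exact: leqW.
- by rewrite -addn1; apply: lcsR.
- by rewrite addSnnS.
Qed.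

Lemma wedge_lcs_eq1_step p q : c.+1 < p + q -> q <= p ->
  (forall r s x y, p < s -> c.+1 < r + s -> lcs r x -> lcs s y -> phi x y = gone) ->
  forall x y, lcs p x -> lcs q y -> phi x y = gone.
Proof.
move=> lt_c_pq le_qp IH x y hx hy.
have [lt_cp | le_pc] := ltnP c p; first by rewrite (lcs_trivial lt_cp hx) wedge1l.
have [q' def_q] : exists q', q = q'.+2 by exists (q - 2); lia.
rewrite def_q in hy lt_c_pq.
apply: (wedge_gen_eq1 (X := lcs p)
  (S := fun z => exists a b, lcs q'.+1 a /\ z = comm a b) _ _ _ hx hy).
- by move=> w x'; apply: lcsJ.
- move=> w _ [a [b [ha ->]]]; exists (conj w a), (conj w b).
  by split; [apply: lcsJ | group_norm].
- (* x /\ [a, b] = (^x a /\ ^x b) (a /\ b)^-1, where ^x a = a and ^x b = [x, b] b with [x, b]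
     in gamma_(p+1), a depth at which a /\ - vanishes by the induction hypothesis. *)
  move=> x' _ hx' [a [b [ha ->]]].
  rewrite wedge_commr conjE (lcs_trivial _ (lcsR hx' ha)) ?gmul1; last by lia.
  rewrite conjE (@wedge_mulr_lcs _ p.+1 p.+1 _ _ _ ha) ?gmulrV //.
  + by lia.
  + by move=> s z lt_ps hz; apply: (IH q'.+1 s) => //; lia.
  + by rewrite -addn1; apply: lcsR.
Qed.

Lemma wedge_lcs_eq1 p q x y : c.+1 < p + q -> lcs p x -> lcs q y -> phi x y = gone.
Proof.
have [n] : exists n, c < maxn p q + n by exists c.+1; lia.
elim: n p q x y => [|n IH] p q x y lt_c_n lt_c_pq hx hy.
  have [lt_cp | le_pc] := ltnP c p; first by rewrite (lcs_trivial lt_cp hx) wedge1l.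
  by rewrite (@lcs_trivial q y) ?wedge1r //; lia.
have IH' m : maxn p q <= m -> forall r s x' y', m < s -> c.+1 < r + s ->
    lcs r x' -> lcs s y' -> phi x' y' = gone.
  by move=> le_m r s x' y' lt_ms lt_c_rs; apply: IH => //; lia.
have [le_qp | lt_pq] := leqP q p.
  by apply: (wedge_lcs_eq1_step lt_c_pq le_qp) => //; apply: (IH' p); lia.
rewrite wedgeC (wedge_lcs_eq1_step (p := q) (q := p)) ?ginv1 //; try lia.
by apply: (IH' q); lia.
Qed.

Lemma wedge_commute p q a b d e : c.+1 < p + q ->
  lcs p (comm a b) -> lcs q (comm d e) -> gcommute (phi a b) (phi d e).
Proof.
move=> lt_c_pq hab hde.
by rewrite /gcommute wedge_commutator (wedge_lcs_eq1 lt_c_pq hab hde) gmul1.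
Qed.
End Nilpotent.
End ExteriorPairing.

Section PascalRecurrence.
Variables (L : AbsGroup) (u : nat -> L) (c12 c13 : L) (F : nat -> nat -> L).
Hypothesis u_comm : forall i j, 3 <= i + j -> gcommute (u i) (u j).
Hypothesis c12_comm : forall i, gcommute c12 (u i).
Hypothesis c13_comm : forall i, gcommute c13 (u i).
Hypothesis c13_c12 : gcommute c13 c12.
Hypothesis u01 : gmul (u 0) (u 1) = gmul (gmul c12 (u 1)) (u 0).
Hypothesis u02 : gmul (u 0) (u 2) = gmul (gmul c13 (u 2)) (u 0).
Hypothesis F0k : forall k, F 0 k = gone.
Hypothesis Fn5 : forall n, F n 5 = gone.
Hypothesis FS : forall n k, k < 5 -> F n.+1 k = gmul (gmul (F n k.+1) (u k)) (F n k).

Local Notation M es := (monomial [:: c13; c12; u 4; u 3; u 2; u 1] es).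
Local Notation uexp k :=
  [:: 0; 0; (k == 4 : nat); (k == 3 : nat); (k == 2 : nat); (k == 1 : nat)].

Lemma mono_pairwise : List.ForallOrdPairs (@gcommute L) [:: c13; c12; u 4; u 3; u 2; u 1].
Proof.
by do !constructor => //; first [exact: c13_comm | exact: c12_comm | exact: u_comm].
Qed.

Lemma mono0 : M [:: 0; 0; 0; 0; 0; 0] = gone.
Proof. by rewrite /=; group_norm. Qed.

Lemma mono_u k : 0 < k -> k < 5 -> u k = M (uexp k).
Proof. by case: k => [|[|[|[|[|k]]]]] //= _ _; group_norm. Qed.

Lemma F_step n k a b : 0 < k < 5 -> size a = 6 -> size b = 6 ->
  F n k.+1 = M a -> F n k = M b ->
  F n.+1 k = M (addv (addv a (uexp k)) b).
Proof.
move=> /andP[k_gt0 k_lt5] sa sb Fa Fb.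
rewrite FS // Fa Fb (mono_u k_gt0 k_lt5) !(monomialD mono_pairwise) //.
by rewrite size_map size_zip sa sb.
Qed.

Ltac pascal := congr monomial; rewrite /addv /= ?binS ?bin0 ?bin1; repeat congr (_ :: _); lia.

Lemma F4E n : F n 4 = M [:: 0; 0; n; 0; 0; 0].
Proof.
elim: n => [|n IH]; first by rewrite F0k mono0.
by rewrite (F_step (a := [:: 0; 0; 0; 0; 0; 0]) _ _ _ _ IH) ?Fn5 ?mono0 //; pascal.
Qed.

Lemma F3E n : F n 3 = M [:: 0; 0; 'C(n, 2); n; 0; 0].
Proof.
elim: n => [|n IH]; first by rewrite F0k mono0.
by rewrite (F_step _ _ _ (F4E n) IH) //; pascal.
Qed.

Lemma F2E n : F n 2 = M [:: 0; 0; 'C(n, 3); 'C(n, 2); n; 0].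
Proof.
elim: n => [|n IH]; first by rewrite F0k mono0.
by rewrite (F_step _ _ _ (F3E n) IH) //; pascal.
Qed.

Lemma F1E n : F n 1 = M [:: 0; 0; 'C(n, 4); 'C(n, 3); 'C(n, 2); n].
Proof.
elim: n => [|n IH]; first by rewrite F0k mono0.
by rewrite (F_step _ _ _ (F2E n) IH) //; pascal.
Qed.

Lemma u0_mono_twist a b d e x y :
  gmul (u 0) (M [:: a; b; d; e; x; y]) = gmul (M [:: a + x; b + y; d; e; x; y]) (u 0).
Proof.
have u0_central : gcommute (u 0) (M [:: a; b; d; e; 0; 0]).
  have -> : M [:: a; b; d; e; 0; 0] = monomial [:: c13; c12; u 4; u 3] [:: a; b; d; e].
    by rewrite /=; group_norm.
  apply: gcommute_monomial; do !constructor;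
    first [exact/gcommute_sym/c13_comm | exact/gcommute_sym/c12_comm | exact: u_comm].
have u0_twist : gmul (u 0) (M [:: 0; 0; 0; 0; x; y]) =
    gmul (M [:: x; y; 0; 0; x; y]) (u 0).
  rewrite /=; group_norm.
  rewrite gmulA (gpow_twist x u02 (c13_comm 2)) -!gmulA.
  rewrite gmulA (gpow_twist y u01 (c12_comm 1)) -!gmulA; congr gmul.
  have u2_c12 : gcommute (gpow (u 2) x) (gpow c12 y).
    by apply/gcommuteX/gcommute_sym/gcommuteX; exact: c12_comm.
  by rewrite !gmulA u2_c12.
have -> : M [:: a; b; d; e; x; y] = gmul (M [:: a; b; d; e; 0; 0]) (M [:: 0; 0; 0; 0; x; y]).
  by rewrite (monomialD mono_pairwise) //; pascal.
rewrite gmulA u0_central -gmulA u0_twist gmulA (monomialD mono_pairwise) //.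
by congr gmul; pascal.
Qed.

Lemma F0E n : F n 0 = gmul
  (M [:: 'C(n, 4); 'C(n, 3); 'C(n, 5); 'C(n, 4); 'C(n, 3); 'C(n, 2)]) (gpow (u 0) n).
Proof.
elim: n => [|n IH]; first by rewrite F0k mono0 gmul1.
rewrite FS // F1E IH gmulA -(gmulA _ (u 0)) u0_mono_twist.
rewrite -(gmulA (M _) (gmul (M _) (u 0))) -(gmulA (M _) (u 0)) gpowSl gmulA.
by rewrite (monomialD mono_pairwise) //; congr gmul; pascal.
Qed.

Lemma pascal_recurrence n : F n 0 =
  gmul (gmul (gmul (gmul (gmul (gmul
    (gpow c13 'C(n, 4)) (gpow c12 'C(n, 3))) (gpow (u 4) 'C(n, 5)))
    (gpow (u 3) 'C(n, 4))) (gpow (u 2) 'C(n, 3))) (gpow (u 1) 'C(n, 2))) (gpow (u 0) n).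
Proof. by rewrite F0E /=; group_norm. Qed.
End PascalRecurrence.

Theorem theorem3p3 (G : AbsGroup) (hG : nilpotent_of_class G 5)
  (L : AbsGroup) (wedge : G -> G -> L) (hw : exterior_pairing wedge)
  (g h : G) (n : nat) :
  wedge (gpow g n) h =
  gmul (gmul (gmul (gmul (gmul (gmul
    (gpow (wedge (comm g h) (comm g (comm g (comm g h)))) 'C(n, 4))
    (gpow (wedge (comm g h) (comm g (comm g h))) 'C(n, 3)))
    (gpow (wedge g (comm g (comm g (comm g (comm g h))))) 'C(n, 5)))
    (gpow (wedge g (comm g (comm g (comm g h)))) 'C(n, 4)))
    (gpow (wedge g (comm g (comm g h))) 'C(n, 3)))
    (gpow (wedge g (comm g h)) 'C(n, 2)))
    (gpow (wedge g h) n).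
Proof.
case: hG => nilG _.
have lcs_h k := lcs_iter_comm g h k.
have lcs_u k : lcs k.+2 (comm g (iter k (comm g) h)) := lcs_h k.+1.
have lcs_c1k k : lcs (2 + k.+3) (comm (comm g h) (iter k.+2 (comm g) h)).
  by apply: lcsR; [exact: lcs_u 0 | exact: lcs_h].
apply: (@pascal_recurrence _ (fun k => wedge g (iter k (comm g) h)) _ _
  (fun n k => wedge (gpow g n) (iter k (comm g) h))).
- by move=> i j le3; apply: (wedge_commute hw nilG _ (lcs_u i) (lcs_u j)); lia.
- by move=> i; apply: (wedge_commute hw nilG _ (lcs_c1k 0) (lcs_u i)); lia.
- by move=> i; apply: (wedge_commute hw nilG _ (lcs_c1k 1) (lcs_u i)); lia.
- by apply: (wedge_commute hw nilG _ (lcs_c1k 1) (lcs_c1k 0)).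
- exact: wedge_commutator.
- exact: wedge_commutator.
- by move=> k; apply: wedge1l.
- by move=> m; rewrite (nilG _ (lcs_h 5)) wedge1r.
- by move=> m k _; apply: wedge_mull_comm.
Qed.
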